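(* Let $n\ge j\ge1$ be integers, and let $\lambda=(\lambda_1,\lambda_2,\lambda_3)\in\mathbb Z^3$ with $\lambda_1\ge\lambda_2\ge\lambda_3$ and $\max\{\lambda_1-\lambda_2,\lambda_2-\lambda_3\}\le n-j$. Then the number of $(ZK,K_n)$-double cosets contained in $ZK\lambda(\varpi)K$ is at most $q^{4n-4j}(1+1/q)^3$.
   Context: $F$ is a $p$-adic field with $p\ne2,3$, ring of integers $R$, uniformizer $\varpi$, residue field of order $q$. $G=GL_3(F)$, $K=GL_3(R)$, $Z$ is the center of $G$, $K_n$ is the subgroup of $K$ of elements congruent to the identity mod $\varpi^n$, and $\lambda(\varpi)=\operatorname{diag}(\varpi^{\lambda_1},\varpi^{\lambda_2},\varpi^{\lambda_3})$. *)

From HB Require Import structures.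
From mathcomp Require Import all_boot all_order all_algebra.
Set Implicit Arguments. Unset Strict Implicit. Unset Printing Implicit Defensive.
Import Order.TTheory GRing.Theory Num.Theory.
Local Open Scope ring_scope.

Section Defs.
Variable F : fieldType.
Variable v : F -> int.  (* normalized discrete valuation, meaningful on nonzero elements *)

Definition vge (x : F) (k : int) : Prop := x = 0 \/ k <= v x.
Definition inR (x : F) : Prop := vge x 0.

(* F is a p-adic field with valuation v, residue characteristic p and residue
   field of order q: a complete, discretely valued field of characteristic 0
   with finite residue field (equivalently, a finite extension of Q_p). *)
Record padic_field (p q : nat) : Prop := {
  v_mul : forall x y, x != 0 -> y != 0 -> v (x * y) = v x + v y;
  v_add : forall x y, x != 0 -> y != 0 -> x + y != 0 ->
            Num.min (v x) (v y) <= v (x + y);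
  v_unif : exists pi : F, pi != 0 /\ v pi = 1;
  char0 : forall m : nat, (m%:R : F) = 0 -> m = 0%N;
  resid_char : prime p /\ vge (p%:R) 1;
  resid_card : exists s : seq F, size s = q /\
      (forall i, (i < q)%N -> inR (nth 0 s i)) /\
      (forall i k, (i < q)%N -> (k < q)%N -> i != k ->
          ~ vge (nth 0 s i - nth 0 s k) 1) /\
      (forall x, inR x -> exists2 i, (i < q)%N & vge (x - nth 0 s i) 1);
  complete : forall u : nat -> F,
      (forall k : int, exists N, forall m m', (N <= m)%N -> (N <= m')%N ->
          vge (u m - u m') k) ->
      exists l, forall k : int, exists N, forall m, (N <= m)%N -> vge (u m - l) k
}.

Definition inK (g : 'M[F]_3) : Prop :=
  (forall i j, inR (g i j)) /\ \det g != 0 /\ v (\det g) = 0.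
Definition inKn (n : nat) (g : 'M[F]_3) : Prop :=
  inK g /\ forall i j, vge ((g - 1%:M) i j) n%:Z.
(* Z = center of GL_3(F) = nonzero scalar matrices *)
Definition inZ (g : 'M[F]_3) : Prop := exists a : F, a != 0 /\ g = a%:M.
Definition inZK (g : 'M[F]_3) : Prop :=
  exists z k, inZ z /\ inK k /\ g = z *m k.
Definition lamw (pi : F) (l1 l2 l3 : int) : 'M[F]_3 :=
  diag_mx (\row_(i < 3) pi ^ (nth 0 [:: l1; l2; l3] i)).
Definition inZKlK (pi : F) (l1 l2 l3 : int) (g : 'M[F]_3) : Prop :=
  exists a b, inZK a /\ inK b /\ g = a *m lamw pi l1 l2 l3 *m b.
Definition same_dc (n : nat) (g h : 'M[F]_3) : Prop :=
  exists a k, inZK a /\ inKn n k /\ h = a *m g *m k.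
End Defs.

From HB Require Import structures.
From mathcomp Require Import all_boot all_order all_algebra.
From mathcomp Require Import ring lra zify.
From Stdlib Require Import ClassicalEpsilon.
Import Order.TTheory GRing.Theory Num.Theory.

(* Write g = A λ(ϖ) B with A ∈ ZK and B ∈ K.  If λ (B' B^-1) λ^-1 ∈ K then
   g' ∈ ZK g, so g and g' lie in one (ZK, K_n)-double coset.  With a = λ1 - λ2 and
   b = λ2 - λ3, the condition λ h λ^-1 ∈ K on h ∈ K reads h10 ∈ p^a, h20 ∈ p^(a+b),
   h21 ∈ p^b, and it holds for h = B' B^-1 as soon as B and B' define the same two
   points of projective planes: the bottom row, in P^2(R/p^b), and, for a fixed
   representative t of that point, the first column of t B^-1 with its last entry
   (which lies in p^b) divided by ϖ^b, in P^2(R/p^a).  Since P^2(R/p^k) has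
   q^(2k) (1 + 1/q + 1/q^2) points for k >= 1, there are at most
   q^(2a+2b) (1 + 1/q + 1/q^2)^2 <= q^(4(n-j)) (1 + 1/q)^3 double cosets, the last
   inequality because q >= 2. *)

Set Implicit Arguments.
Unset Strict Implicit.
Unset Printing Implicit Defensive.

Local Open Scope ring_scope.

Definition o0 : 'I_3 := @Ordinal 3 0 isT.
Definition o1 : 'I_3 := @Ordinal 3 1 isT.
Definition o2 : 'I_3 := @Ordinal 3 2 isT.

Lemma ord3P (P : 'I_3 -> Prop) : P o0 -> P o1 -> P o2 -> forall i, P i.
Proof.
by move=> P0 P1 P2 [[|[|[|//]]] lt_i3]; rewrite (bool_irrelevance lt_i3 isT).
Qed.

Lemma sum_ord3 (R : nmodType) (f : 'I_3 -> R) : \sum_i f i = f o0 + f o1 + f o2.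
Proof.
by rewrite !big_ord_recl big_ord0 addr0 addrA; congr (f _ + f _ + f _); apply: val_inj.
Qed.

Section Valuation.
Variables (F : fieldType) (v : F -> int) (p q : nat).
Hypothesis HF : padic_field v p q.

Lemma v_one : v 1 = 0.
Proof.
have := v_mul HF (oner_neq0 F) (oner_neq0 F); rewrite mulr1 => v11.
by apply: (addrI (v 1)); rewrite addr0 -v11.
Qed.

Lemma v_inv x : x != 0 -> v x^-1 = - v x.
Proof.
by move=> x_neq0; have := v_mul HF x_neq0 (invr_neq0 x_neq0); rewrite mulfV // v_one; lia.
Qed.

Lemma v_opp x : x != 0 -> v (- x) = v x.
Proof.
move=> x_neq0; have N1_neq0 : (-1 : F) != 0 by rewrite oppr_eq0 oner_neq0.
have v_N1 : v (-1) = 0.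
  by have := v_mul HF N1_neq0 N1_neq0; rewrite mulrNN mulr1 v_one; lia.
by rewrite -mulN1r (v_mul HF N1_neq0 x_neq0) v_N1 add0r.
Qed.

Lemma v_exprz x (z : int) : x != 0 -> v (x ^ z) = z * v x.
Proof.
move=> x_neq0; have v_exprn k : v (x ^+ k) = k%:Z * v x.
  elim: k => [|k IHk]; first by rewrite expr0 v_one mul0r.
  by rewrite exprS (v_mul HF x_neq0 (expf_neq0 _ x_neq0)) IHk; lia.
case: z => k; first by rewrite -exprnP v_exprn.
by rewrite NegzE -exprnN v_inv ?expf_neq0 // v_exprn; lia.
Qed.

Lemma vge_le x k l : k <= l -> vge v x l -> vge v x k.
Proof. by move=> le_kl [->|le_lx]; [left | right; apply: le_trans le_lx]. Qed.

Lemma vgeD x y k : vge v x k -> vge v y k -> vge v (x + y) k.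
Proof.
move=> vx vy; have [->|x_neq0] := eqVneq x 0; first by rewrite add0r.
have [->|y_neq0] := eqVneq y 0; first by rewrite addr0.
have [->|xy_neq0] := eqVneq (x + y) 0; first by left.
case: vx => [/eqP|le_kx]; first by rewrite (negbTE x_neq0).
case: vy => [/eqP|le_ky]; first by rewrite (negbTE y_neq0).
by right; apply: le_trans (v_add HF x_neq0 y_neq0 xy_neq0); rewrite le_min le_kx.
Qed.

Lemma vgeN x k : vge v x k -> vge v (- x) k.
Proof.
have [-> _|x_neq0] := eqVneq x 0; first by rewrite oppr0; left.
by move=> [/eqP|le_kx]; [rewrite (negbTE x_neq0) | right; rewrite v_opp].
Qed.

Lemma vgeB x y k : vge v x k -> vge v y k -> vge v (x - y) k.
Proof. by move=> vx vy; apply: vgeD vx (vgeN vy). Qed.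

Lemma vgeM x y k l : vge v x k -> vge v y l -> vge v (x * y) (k + l).
Proof.
move=> [->|le_kx]; first by rewrite mul0r; left.
move=> [->|le_ly]; first by rewrite mulr0; left.
have [->|x_neq0] := eqVneq x 0; first by rewrite mul0r; left.
have [->|y_neq0] := eqVneq y 0; first by rewrite mulr0; left.
by right; rewrite (v_mul HF x_neq0 y_neq0) lerD.
Qed.

Lemma vgeMl x y k : inR v x -> vge v y k -> vge v (x * y) k.
Proof. by move=> Rx vy; have := vgeM Rx vy; rewrite add0r. Qed.

Lemma vgeMr x y k : vge v x k -> inR v y -> vge v (x * y) k.
Proof. by move=> vx Ry; have := vgeM vx Ry; rewrite addr0. Qed.

Lemma vge_sum (I : finType) (f : I -> F) k :
  (forall i, vge v (f i) k) -> vge v (\sum_i f i) k.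
Proof.
by move=> vf; apply: (big_ind (vge v ^~ k)) => [|x y|i _]; [left | exact: vgeD | exact: vf].
Qed.

Lemma inR1 : inR v 1.
Proof. by right; rewrite v_one. Qed.

Lemma inR_prod (I : finType) (f : I -> F) :
  (forall i, inR v (f i)) -> inR v (\prod_i f i).
Proof.
by move=> Rf; apply: (big_ind (inR v)) => [|x y|i _]; [exact: inR1 | exact: vgeMl | exact: Rf].
Qed.

Lemma inR_sign k : inR v ((-1) ^+ k).
Proof.
right; rewrite -signr_odd; case: (odd k); last by rewrite expr0 v_one.
by rewrite expr1 v_opp ?oner_neq0 // v_one.
Qed.

Definition vunit (x : F) : bool := (x != 0) && (v x == 0).

Lemma vunit_neq0 c : vunit c -> c != 0.
Proof. by case/andP. Qed.

Lemma vunit_inR c : vunit c -> inR v c.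
Proof. by case/andP=> _ /eqP v_c; right; rewrite v_c. Qed.

Lemma vunitV c : vunit c -> vunit c^-1.
Proof. by case/andP=> c_neq0 /eqP v_c; rewrite /vunit invr_eq0 c_neq0 v_inv // v_c. Qed.

Lemma vunitM c d : vunit c -> vunit d -> vunit (c * d).
Proof.
case/andP=> c_neq0 /eqP v_c /andP [d_neq0 /eqP v_d].
by rewrite /vunit mulf_neq0 // (v_mul HF c_neq0 d_neq0) v_c v_d.
Qed.

Lemma vge_vunitMl c x k : vunit c -> vge v (c * x) k -> vge v x k.
Proof.
move=> c_unit vcx; have c_neq0 := vunit_neq0 c_unit.
by rewrite -(mulKf c_neq0 x); apply: vgeMl vcx; apply/vunit_inR/vunitV.
Qed.

Lemma vge1_nonunit x : inR v x -> ~~ vunit x -> vge v x 1.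
Proof.
move=> [->|le0x]; first by left.
by rewrite negb_and negbK => /orP [/eqP ->|v_neq0]; [left | right; lia].
Qed.

Lemma residue_system :
  exists (r : 'I_q -> F) (d : F -> 'I_q), forall x, inR v x -> vge v (x - r (d x)) 1.
Proof.
have [s [_ [_ [_ s_cover]]]] := resid_card HF.
have [i0 lt_i0q _] := s_cover 0 (or_introl erefl).
pose res x (i : 'I_q) := vge v (x - nth 0 s i) 1.
exists (fun i => nth 0 s i), (fun x => epsilon (inhabits (Ordinal lt_i0q)) (res x)).
move=> x Rx; apply: (epsilon_spec _ (res x)).
by have [i lt_iq res_xi] := s_cover x Rx; exists (Ordinal lt_iq).
Qed.

Lemma residue_card_ge2 : (2 <= q)%N.
Proof.
have [s [_ [_ [_ s_cover]]]] := resid_card HF.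
have [i0 lt_i0q res0] := s_cover 0 (or_introl erefl).
have [i1 lt_i1q res1] := s_cover 1 inR1.
suff : i0 != i1 by lia.
apply/eqP => i01; have := vgeB res1 res0; rewrite i01 opprB addrA subrK subr0.
by case=> [/eqP|]; rewrite ?oner_eq0 ?v_one.
Qed.

Definition primitive (x : 'I_3 -> F) : Prop := (forall i, inR v (x i)) /\ exists i, vunit (x i).

Definition intm m n (A : 'M[F]_(m, n)) : Prop := forall i j, inR v (A i j).

Lemma intm_mul m n k (A : 'M[F]_(m, n)) (B : 'M[F]_(n, k)) :
  intm A -> intm B -> intm (A *m B).
Proof. by move=> RA RB i j; rewrite mxE; apply: vge_sum => l; apply: vgeMl (RA i l) (RB l j). Qed.

Lemma inR_det n (A : 'M[F]_n) : intm A -> inR v (\det A).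
Proof.
move=> RA; apply: vge_sum => s; apply: vgeMl; first exact: inR_sign.
by apply: inR_prod => i; apply: RA.
Qed.

Lemma inR_cofactor n (A : 'M[F]_n.+1) i j : intm A -> inR v (cofactor A i j).
Proof.
by move=> RA; apply: vgeMl (inR_sign _) _; apply: inR_det => k l; rewrite !mxE.
Qed.

Lemma inK_intm A : inK v A -> intm A.
Proof. by case. Qed.

Lemma inK_unitmx A : inK v A -> A \in unitmx.
Proof. by case=> _ [det_neq0 _]; rewrite unitmxE unitfE. Qed.

Lemma inK1 : inK v 1%:M.
Proof.
split=> [i j|]; last by rewrite det1 oner_neq0 v_one.
by rewrite mxE; case: (i == j); [exact: inR1 | left].
Qed.

Lemma inK_mul A B : inK v A -> inK v B -> inK v (A *m B).
Proof.
move=> [RA [dA_neq0 v_dA]] [RB [dB_neq0 v_dB]]; split; first exact: intm_mul.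
by rewrite det_mulmx mulf_neq0 // (v_mul HF dA_neq0 dB_neq0) v_dA v_dB.
Qed.

Lemma inK_inv A : inK v A -> inK v (invmx A).
Proof.
move=> A_K; have [RA [dA_neq0 v_dA]] := A_K.
have R_dAV : inR v (\det A)^-1 by right; rewrite v_inv // v_dA.
split=> [i j|]; last by rewrite det_inv invr_eq0 dA_neq0 v_inv // v_dA.
by rewrite /invmx inK_unitmx // !mxE; exact: vgeMl R_dAV (inR_cofactor _ _ RA).
Qed.

Lemma inK_tr A : inK v A -> inK v A^T.
Proof. by move=> [RA dA]; split=> [i j|]; rewrite ?det_tr // mxE. Qed.

Lemma inK_row_primitive A i : inK v A -> primitive (A i).
Proof.
move=> [RA [dA_neq0 v_dA]]; split=> //; apply/existsP; apply: contraT.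
rewrite negb_exists => /forallP row_nonunit.
have : vge v (\det A) 1.
  rewrite (expand_det_row A i); apply: vge_sum => j; apply: vgeMr (inR_cofactor _ _ RA).
  exact: vge1_nonunit.
by case=> [/eqP|]; [rewrite (negbTE dA_neq0) | rewrite v_dA].
Qed.

Lemma inK_col_primitive A j : inK v A -> primitive (fun i => A i j).
Proof.
move=> /inK_tr/(inK_row_primitive j) [RA [i ui]].
by split=> [k|]; [move: (RA k) | exists i; move: ui]; rewrite mxE.
Qed.

Definition proj_congr (k : int) (x y : 'I_3 -> F) : Prop :=
  exists2 c, vunit c & forall i, vge v (y i - c * x i) k.

Lemma proj_congr_sym k x y : proj_congr k x y -> proj_congr k y x.
Proof.
case=> c uc congr_xy; exists c^-1 => [|i]; first exact: (vunitV uc).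
have -> : x i - c^-1 * y i = - c^-1 * (y i - c * x i) by field; exact: vunit_neq0 uc.
exact: vgeMl (vgeN (vunit_inR (vunitV uc))) (congr_xy i).
Qed.

Lemma proj_congr_pivot k i x y :
  vunit (x i) -> vunit (y i) ->
  (forall j, j != i -> vge v (y j / y i - x j / x i) k) -> proj_congr k x y.
Proof.
move=> ux uy ratio_congr; exists (y i / x i) => [|j]; first exact/vunitM/vunitV.
have [->|ji] := eqVneq j i; first by rewrite divfK ?vunit_neq0 // subrr; left.
have -> : y j - y i / x i * x j = y i * (y j / y i - x j / x i).
  by field; rewrite (vunit_neq0 ux) (vunit_neq0 uy).
exact: vgeMl (vunit_inR uy) (ratio_congr j ji).
Qed.

Section Uniformizer.
Variable pi : F.
Hypotheses (pi_neq0 : pi != 0) (v_pi : v pi = 1).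

Lemma vge_pi_exprz (z : int) : vge v (pi ^ z) z.
Proof. by right; rewrite (v_exprz _ pi_neq0) v_pi mulr1. Qed.

Lemma inR_divpi x : vge v x 1 -> inR v (x / pi).
Proof.
move=> vx; have := vgeM vx (vge_pi_exprz (-1)).
by rewrite exprN1 subrr.
Qed.

Lemma vge_divpi x y (k : nat) : vge v (x / pi - y / pi) k -> vge v (x - y) k.+1.
Proof.
move=> v_div; have -> : x - y = pi * (x / pi - y / pi) by field.
by have := vgeM (vge_pi_exprz 1) v_div; rewrite expr1z.
Qed.

Lemma lamwK (l1 l2 l3 : int) : lamw pi l1 l2 l3 *m lamw pi (- l1) (- l2) (- l3) = 1%:M.
Proof.
rewrite /lamw mulmx_diag -diag_const_mx; congr diag_mx; apply/rowP.
by elim/ord3P; rewrite !mxE /= -expfzDr // subrr expr0z.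
Qed.

Lemma lamwVK (l1 l2 l3 : int) : lamw pi (- l1) (- l2) (- l3) *m lamw pi l1 l2 l3 = 1%:M.
Proof. by have := lamwK (- l1) (- l2) (- l3); rewrite !opprK. Qed.

Lemma inR_conj_pi x (li lj k : int) :
  vge v x k -> 0 <= li + k - lj -> inR v (pi ^ li * x * pi ^ (- lj)).
Proof.
move=> vx le0; apply: vge_le le0 _.
by have := vgeM (vgeM (vge_pi_exprz li) vx) (vge_pi_exprz (- lj)).
Qed.

Lemma inK_lam_conj (l1 l2 l3 : int) (a b : nat) h :
  l1 - l2 = a -> l2 - l3 = b -> inK v h ->
  vge v (h o1 o0) a -> vge v (h o2 o0) (a + b)%N -> vge v (h o2 o1) b ->
  inK v (lamw pi l1 l2 l3 *m h *m lamw pi (- l1) (- l2) (- l3)).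
Proof.
move=> l12 l23 [Rh det_h] v10 v20 v21; split; last first.
  by rewrite !det_mulmx mulrAC -det_mulmx lamwK det1 mul1r.
move=> i j; rewrite /lamw mul_diag_mx mul_mx_diag !mxE.
elim/ord3P: i; elim/ord3P: j => /=.
all: first [ apply: inR_conj_pi (Rh _ _) _; lia
           | apply: inR_conj_pi v10 _; lia
           | apply: inR_conj_pi v20 _; lia
           | apply: inR_conj_pi v21 _; lia ].
Qed.

Lemma same_dc_lam_conj n (l1 l2 l3 : int) A A' B B' :
  inZK v A -> inZK v A' -> inK v B -> inK v B' ->
  inK v (lamw pi l1 l2 l3 *m (B' *m invmx B) *m lamw pi (- l1) (- l2) (- l3)) ->
  same_dc v n (A *m lamw pi l1 l2 l3 *m B) (A' *m lamw pi l1 l2 l3 *m B').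
Proof.
move=> [_ [k [[z [z_neq0 ->]] [k_K ->]]]] [_ [k' [[z' [z'_neq0 ->]] [k'_K ->]]]] B_K B'_K.
set L := lamw pi l1 l2 l3; set L' := lamw pi (- l1) (- l2) (- l3).
set h := L *m (B' *m invmx B) *m L' => h_K.
exists ((z' / z)%:M *m (k' *m h *m invmx k)), 1%:M; split; last split.
- exists (z' / z)%:M, (k' *m h *m invmx k); split.
    by exists (z' / z); rewrite mulf_neq0 ?invr_eq0.
  by split=> //; apply: inK_mul (inK_mul k'_K h_K) (inK_inv k_K).
- by split=> [|i j]; [exact: inK1 | rewrite subrr mxE; left].
rewrite mulmx1 !mul_scalar_mx -!scalemxAl -scalemxAr scalerA divfK //; congr (_ *: _).
rewrite /h !mulmxA -(mulmxA _ (invmx k) k) mulVmx ?inK_unitmx // mulmx1.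
rewrite -(mulmxA _ L' L) lamwVK mulmx1.
by rewrite -(mulmxA _ (invmx B) B) mulVmx ?inK_unitmx // mulmx1.
Qed.

Section Residues.
Variables (r : 'I_q -> F) (d : F -> 'I_q).
Hypothesis d_res : forall x, inR v x -> vge v (x - r (d x)) 1.

Fixpoint digits k x : k.-tuple 'I_q :=
  match k return k.-tuple 'I_q with
  | 0 => [tuple]
  | k'.+1 => cons_tuple (d x) (digits k' ((x - r (d x)) / pi))
  end.

Lemma eq_digits_vge k x y :
  inR v x -> inR v y -> digits k x = digits k y -> vge v (x - y) k.
Proof.
elim: k x y => [|k IHk] x y Rx Ry /=; first by move=> _; apply: vgeB.
move/(congr1 val) => /= [dxy /val_inj digits_eq].
have := IHk _ _ (inR_divpi (d_res Rx)) (inR_divpi (d_res Ry)) digits_eq.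
by rewrite dxy => /vge_divpi; rewrite opprB addrA subrK.
Qed.

Lemma eq_digits_ratio k a b u w :
  inR v a -> inR v b -> vunit u -> vunit w ->
  digits k (a / u) = digits k (b / w) -> vge v (b / w - a / u) k.
Proof.
move=> Ra Rb uu uw digits_eq; rewrite -opprB; apply: vgeN.
apply: eq_digits_vge digits_eq.
  exact: vgeMr Ra (vunit_inR (vunitV uu)).
exact: vgeMr Rb (vunit_inR (vunitV uw)).
Qed.

Lemma eq_digits_ratio_pi k a b u w :
  vge v a 1 -> vge v b 1 -> vunit u -> vunit w ->
  digits k (a / u / pi) = digits k (b / w / pi) -> vge v (b / w - a / u) k.+1.
Proof.
move=> va vb uu uw digits_eq; apply: vge_divpi; rewrite -opprB; apply: vgeN.
apply: eq_digits_vge digits_eq; apply: inR_divpi.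
  exact: vgeMr va (vunit_inR (vunitV uu)).
exact: vgeMr vb (vunit_inR (vunitV uw)).
Qed.

(* A point of P^2(R/p^k), k >= 1, is scaled so that its first unit coordinate is 1;
   the other two coordinates are recorded to precision p^k by their digits, except
   that coordinates before the pivot lie in p and, divided by ϖ, need one digit less. *)
Definition proj_code_type k : finType :=
  if k is k'.+1 then
    (k.-tuple 'I_q * k.-tuple 'I_q
     + (k'.-tuple 'I_q * k.-tuple 'I_q + k'.-tuple 'I_q * k'.-tuple 'I_q))%type
  else unit.

Definition proj_code k (x : 'I_3 -> F) : proj_code_type k :=
  match k return proj_code_type k with
  | 0 => tt
  | k'.+1 =>
    if vunit (x o0) then inl (digits k'.+1 (x o1 / x o0), digits k'.+1 (x o2 / x o0))
    else if vunit (x o1) then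
      inr (inl (digits k' (x o0 / x o1 / pi), digits k'.+1 (x o2 / x o1)))
    else inr (inr (digits k' (x o0 / x o2 / pi), digits k' (x o1 / x o2 / pi)))
  end.

Lemma eq_proj_code k x y :
  primitive x -> primitive y -> proj_code k x = proj_code k y -> proj_congr k x y.
Proof.
case: k => [|k] [Rx [ix uix]] [Ry [iy uiy]] /=.
  move=> _; exists 1 => [|i]; first by rewrite /vunit oner_neq0 v_one.
  by rewrite mul1r; exact: vgeB (Ry i) (Rx i).
case: (boolP (vunit (x o0))) => ux0; case: (boolP (vunit (y o0))) => uy0.
- move=> /eqP/andP [/eqP d1 /eqP d2].
  apply: (proj_congr_pivot ux0 uy0); elim/ord3P => // _.
  + exact: eq_digits_ratio (Rx o1) (Ry o1) ux0 uy0 d1.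
  + exact: eq_digits_ratio (Rx o2) (Ry o2) ux0 uy0 d2.
- by case: ifP.
- by case: ifP.
have vx0 := vge1_nonunit (Rx o0) ux0; have vy0 := vge1_nonunit (Ry o0) uy0.
case: (boolP (vunit (x o1))) => ux1; case: (boolP (vunit (y o1))) => uy1 //.
  move=> /eqP/andP [/eqP d0 /eqP d2].
  apply: (proj_congr_pivot ux1 uy1); elim/ord3P => // _.
  + exact: eq_digits_ratio_pi vx0 vy0 ux1 uy1 d0.
  + exact: eq_digits_ratio (Rx o2) (Ry o2) ux1 uy1 d2.
have vx1 := vge1_nonunit (Rx o1) ux1; have vy1 := vge1_nonunit (Ry o1) uy1.
have [ux2 uy2] : vunit (x o2) /\ vunit (y o2).
  by split; [elim/ord3P: ix uix | elim/ord3P: iy uiy];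
    rewrite ?(negbTE ux0) ?(negbTE ux1) ?(negbTE uy0) ?(negbTE uy1).
move=> /eqP/andP [/eqP d0 /eqP d1].
apply: (proj_congr_pivot ux2 uy2); elim/ord3P => // _.
+ exact: eq_digits_ratio_pi vx0 vy0 ux2 uy2 d0.
+ exact: eq_digits_ratio_pi vx1 vy1 ux2 uy2 d1.
Qed.

Section CosetCode.
Variables a b : nat.

(* For W = t B^-1 the entry W o2 o0 lies in p^b (row2_mulmxV_vge): dividing it by ϖ^b
   keeps the column integral and records that entry to precision p^(a+b). *)
Definition scaled_col0 (W : 'M[F]_3) : 'I_3 -> F :=
  fun i => if i == o2 then W o2 o0 / pi ^+ b else W i o0.

Lemma row2_mulmxV_vge (X Y : 'M[F]_3) k :
  inK v Y -> proj_congr k (Y o2) (X o2) -> forall j, j != o2 -> vge v ((X *m invmx Y) o2 j) k.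
Proof.
move=> Y_K [c _ congr_XY] j j_neq2.
have : (Y *m invmx Y) o2 j = 0.
  by rewrite mulmxV ?inK_unitmx // mxE eq_sym (negbTE j_neq2).
rewrite !mxE => YYV_2j.
have -> : \sum_l X o2 l * invmx Y l j = \sum_l (X o2 l - c * Y o2 l) * invmx Y l j.
  under [RHS]eq_bigr do rewrite mulrBl -mulrA.
  by rewrite sumrB -mulr_sumr YYV_2j mulr0 subr0.
apply: vge_sum => l; exact: vgeMr (congr_XY l) (inK_intm (inK_inv Y_K) l j).
Qed.

Lemma primitive_scaled_col0 B t :
  inK v B -> inK v t -> proj_congr b (t o2) (B o2) -> primitive (scaled_col0 (t *m invmx B)).
Proof.
move=> B_K t_K congr_tB; set W := t *m invmx B.
have vW20 : vge v (W o2 o0) b := row2_mulmxV_vge B_K (proj_congr_sym congr_tB) (j := o0) isT.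
have [RW [i ui]] := inK_col_primitive o0 (inK_mul t_K (inK_inv B_K)).
split=> [k|].
  rewrite /scaled_col0; case: eqP => _; last exact: RW.
  by rewrite exprnN; have := vgeM vW20 (vge_pi_exprz (- b%:Z)); rewrite subrr.
have [i2|i_neq2] := eqVneq i o2; last by exists i; rewrite /scaled_col0 (negbTE i_neq2).
rewrite {}i2 in ui; exists o2; rewrite /scaled_col0 eqxx.
have b0 : b = 0%N.
  case: vW20 => [W20_0|]; first by move: ui; rewrite W20_0 /vunit eqxx.
  by case/andP: ui => _ /eqP ->; lia.
by rewrite b0 expr0 divr1.
Qed.

Lemma scaled_col0_congr W W' :
  proj_congr a (scaled_col0 W) (scaled_col0 W') ->
  exists2 e, vunit e & (forall k, vge v (W' k o0 - e * W k o0) a)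
                      /\ vge v (W' o2 o0 - e * W o2 o0) (a + b)%N.
Proof.
case=> e ue congr_W; exists e => //.
have v20 : vge v (W' o2 o0 - e * W o2 o0) (a + b)%N.
  have pib_neq0 : pi ^+ b != 0 by rewrite expf_neq0.
  have -> : W' o2 o0 - e * W o2 o0 = pi ^+ b * (W' o2 o0 / pi ^+ b - e * (W o2 o0 / pi ^+ b)).
    by field.
  have := vgeM (vge_pi_exprz b) (congr_W o2).
  by rewrite /scaled_col0 eqxx -exprnP -PoszD addnC.
split=> // k; have [->|k_neq2] := eqVneq k o2.
  by apply: vge_le v20; rewrite PoszD lerDl.
by have := congr_W k; rewrite /scaled_col0 (negbTE k_neq2).
Qed.

Lemma coset_invariants B B' t :
  inK v B -> inK v B' -> inK v t ->
  proj_congr b (t o2) (B o2) -> proj_congr b (t o2) (B' o2) ->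
  proj_congr a (scaled_col0 (t *m invmx B)) (scaled_col0 (t *m invmx B')) ->
  [/\ vge v ((B' *m invmx B) o1 o0) a, vge v ((B' *m invmx B) o2 o0) (a + b)%N
    & vge v ((B' *m invmx B) o2 o1) b].
Proof.
move=> B_K B'_K t_K congr_tB congr_tB' /scaled_col0_congr [e ue [v_col0 v_col20]].
set W := t *m invmx B; set W' := t *m invmx B'; set U := B' *m invmx t.
have UW : B' *m invmx B = U *m W.
  by rewrite /U /W mulmxA -(mulmxA B') mulVmx ?inK_unitmx // mulmx1.
have UW' : U *m W' = 1%:M.
  by rewrite /U /W' mulmxA -(mulmxA B') mulVmx ?inK_unitmx // mulmx1 mulmxV ?inK_unitmx.
have RU := inK_intm (inK_mul B'_K (inK_inv t_K)).
have RW := inK_intm (inK_mul t_K (inK_inv B_K)).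
have vU2 : forall k, k != o2 -> vge v (U o2 k) b := row2_mulmxV_vge t_K congr_tB'.
have col0 i : e * (B' *m invmx B) i o0 = 1%:M i o0 - \sum_k U i k * (W' k o0 - e * W k o0).
  by rewrite UW -UW' !mxE mulr_sumr -sumrB; apply: eq_bigr => k _; ring.
split.
- apply: (vge_vunitMl ue); rewrite col0 mxE /= sub0r; apply: vgeN.
  by apply: vge_sum => k; exact: vgeMl (RU _ _) (v_col0 k).
- apply: (vge_vunitMl ue); rewrite col0 mxE /= sub0r; apply: vgeN.
  rewrite sum_ord3; apply: vgeD; first apply: vgeD.
  + by rewrite addnC PoszD; exact: vgeM (vU2 o0 isT) (v_col0 o0).
  + by rewrite addnC PoszD; exact: vgeM (vU2 o1 isT) (v_col0 o1).
  + exact: vgeMl (RU o2 o2) v_col20.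
- rewrite UW mxE sum_ord3; apply: vgeD; first apply: vgeD.
  + exact: vgeMr (vU2 o0 isT) (RW o0 o1).
  + exact: vgeMr (vU2 o1 isT) (RW o1 o1).
  + exact: vgeMl (RU o2 o2) (row2_mulmxV_vge B_K (proj_congr_sym congr_tB) (j := o1) isT).
Qed.

Definition row2_code (B : 'M[F]_3) : proj_code_type b := proj_code b (B o2).

Definition row2_rep (c : proj_code_type b) : 'M[F]_3 :=
  epsilon (inhabits 0) (fun t => inK v t /\ row2_code t = c).

Definition coset_code (B : 'M[F]_3) : proj_code_type b * proj_code_type a :=
  (row2_code B, proj_code a (scaled_col0 (row2_rep (row2_code B) *m invmx B))).

Lemma row2_rep_spec B :
  inK v B -> inK v (row2_rep (row2_code B)) /\ row2_code (row2_rep (row2_code B)) = row2_code B.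
Proof.
move=> B_K; apply: (epsilon_spec (inhabits 0) (fun t => inK v t /\ row2_code t = row2_code B)).
by exists B.
Qed.

Lemma same_dc_of_coset_code n (l1 l2 l3 : int) A A' B B' :
  l1 - l2 = a -> l2 - l3 = b -> inZK v A -> inZK v A' -> inK v B -> inK v B' ->
  coset_code B = coset_code B' ->
  same_dc v n (A *m lamw pi l1 l2 l3 *m B) (A' *m lamw pi l1 l2 l3 *m B').
Proof.
move=> l12 l23 A_ZK A'_ZK B_K B'_K [code1_eq code2_eq].
rewrite -code1_eq in code2_eq; have [t_K code_t] := row2_rep_spec B_K.
set t := row2_rep (row2_code B) in t_K code_t code2_eq.
have code_t' : row2_code t = row2_code B' by rewrite code_t.
have row2_prim := inK_row_primitive o2.
have congr_tB := eq_proj_code (row2_prim _ t_K) (row2_prim _ B_K) code_t.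
have congr_tB' := eq_proj_code (row2_prim _ t_K) (row2_prim _ B'_K) code_t'.
have [v10 v20 v21] := coset_invariants B_K B'_K t_K congr_tB congr_tB'
  (eq_proj_code (primitive_scaled_col0 B_K t_K congr_tB)
                (primitive_scaled_col0 B'_K t_K congr_tB') code2_eq).
apply: (same_dc_lam_conj n A_ZK A'_ZK B_K B'_K).
exact: inK_lam_conj l12 l23 (inK_mul B'_K (inK_inv B_K)) v10 v20 v21.
Qed.

End CosetCode.

End Residues.
End Uniformizer.
End Valuation.

Lemma size_le_card_of_code (X : Type) (T : finType) (x0 : X) (s : seq X)
    (has_code : X -> T -> Prop) (E : X -> X -> Prop) :
  (forall i, (i < size s)%N -> exists c, has_code (nth x0 s i) c) ->
  (forall x y c, has_code x c -> has_code y c -> E x y) ->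
  (forall i k, (i < size s)%N -> (k < size s)%N -> i != k -> ~ E (nth x0 s i) (nth x0 s k)) ->
  (size s <= #|T|)%N.
Proof.
move=> coded same_code distinct.
pose c (i : 'I_(size s)) := proj1_sig (constructive_indefinite_description _ (coded i (ltn_ord i))).
have c_spec (i : 'I_(size s)) : has_code (nth x0 s i) (c i).
  exact: proj2_sig (constructive_indefinite_description _ (coded i (ltn_ord i))).
have c_inj : injective c.
  move=> i k c_ik; apply/val_inj/eqP/negPn/negP => i_neq_k.
  apply: (distinct i k (ltn_ord i) (ltn_ord k) i_neq_k).
  by apply: same_code (c_spec i) _; rewrite c_ik.
by rewrite -[size s]card_ord; exact: leq_card c_inj.
Qed.


Lemma card_proj_code_type_le q k m : (0 < q)%N -> (k <= m)%N ->
  (#|proj_code_type q k|%:R : rat) <= q%:R ^+ (2 * m) * (1 + 1 / q%:R + 1 / q%:R ^+ 2).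
Proof.
move=> q_gt0 le_km; set Q : rat := q%:R.
have Q_ge1 : 1 <= Q by rewrite /Q (ler_nat rat 1 q).
have Q_neq0 : Q != 0 by apply/eqP => Q0; rewrite Q0 in Q_ge1.
have proj_ge1 : 1 <= 1 + 1 / Q + 1 / Q ^+ 2.
  by rewrite -addrA lerDl addr_ge0 // divr_ge0 ?exprn_ge0 //; lra.
case: k le_km => [|k] le_km.
  rewrite card_unit; apply: (le_trans proj_ge1); rewrite ler_peMl ?exprn_ege1 //; lra.
rewrite !card_sum !card_prod !card_tuple card_ord.
have -> : ((q ^ k.+1 * q ^ k.+1 + (q ^ k * q ^ k.+1 + q ^ k * q ^ k))%N%:R : rat)
    = Q ^+ (2 * k.+1) * (1 + 1 / Q + 1 / Q ^+ 2).
  by rewrite !natrD !natrM !natrX -/Q mulnC !exprM !exprS; field.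
by rewrite ler_pM2r; [apply: ler_weXn2l; [|rewrite leq_mul2l le_km] | lra].
Qed.

Lemma sqr_proj_factor_le (R : realFieldType) (t : R) :
  0 <= t -> t <= 1 / 2 -> (1 + t + t ^+ 2) ^+ 2 <= (1 + t) ^+ 3.
Proof. by move=> t_ge0 t_le; rewrite !exprS expr0 !mulr1; nra. Qed.

Lemma card_proj_code_pair_le q a b m : (2 <= q)%N -> (a <= m)%N -> (b <= m)%N ->
  ((#|proj_code_type q b| * #|proj_code_type q a|)%N%:R : rat)
    <= q%:R ^+ (4 * m) * (1 + 1 / q%:R) ^+ 3.
Proof.
move=> q_ge2 le_am le_bm; have q_gt0 : (0 < q)%N by apply: leq_trans q_ge2.
set Q : rat := q%:R.
have Q_ge2 : 2 <= Q by rewrite /Q (ler_nat rat 2 q).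
have t_ge0 : 0 <= 1 / Q by rewrite divr_ge0.
have t_le : 1 / Q <= 1 / 2 by rewrite !div1r lef_pV2 ?posrE //; lra.
rewrite natrM; apply: le_trans (ler_pM (ler0n _ _) (ler0n _ _)
  (card_proj_code_type_le q_gt0 le_bm) (card_proj_code_type_le q_gt0 le_am)) _.
have -> : 1 / Q ^+ 2 = (1 / Q) ^+ 2 by rewrite expr_div_n expr1n.
have -> : Q ^+ (4 * m) = Q ^+ (2 * m) ^+ 2 by rewrite -exprM mulnAC.
rewrite -expr2 exprMn ler_pM2l; first exact: sqr_proj_factor_le.
by rewrite !exprn_gt0 //; lra.
Qed.

Theorem lemma9p7 (F : fieldType) (v : F -> int) (p q : nat)
  (HF : padic_field v p q) (Hp2 : p != 2%N) (Hp3 : p != 3%N)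
  (pi : F) (Hpi0 : pi != 0) (Hpi : v pi = 1)
  (n j : nat) (Hj1 : (1 <= j)%N) (Hjn : (j <= n)%N)
  (l1 l2 l3 : int) (H12 : l2 <= l1) (H23 : l3 <= l2)
  (Hmax : Num.max (l1 - l2) (l2 - l3) <= (n - j)%:Z)
  (s : seq 'M[F]_3)
  (Hin : forall i, (i < size s)%N -> inZKlK v pi l1 l2 l3 (nth 0 s i))
  (Hdist : forall i k, (i < size s)%N -> (k < size s)%N -> i != k ->
             ~ same_dc v n (nth 0 s i) (nth 0 s k)) :
  ((size s)%:R : rat) <= (q%:R ^+ (4 * (n - j)) * (1 + 1 / q%:R) ^+ 3 : rat).
Proof.
(* Distinct double cosets already lie in distinct left ZK-cosets. *)
have [r [d d_res]] := residue_system HF.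
have [a l12] : exists a : nat, l1 - l2 = a.
  by exists `|l1 - l2|%N; rewrite gez0_abs // subr_ge0.
have [b l23] : exists b : nat, l2 - l3 = b.
  by exists `|l2 - l3|%N; rewrite gez0_abs // subr_ge0.
move: Hmax; rewrite l12 l23 ge_max !lez_nat => /andP [le_a le_b].
apply: le_trans (card_proj_code_pair_le (residue_card_ge2 HF) le_a le_b).
rewrite ler_nat -card_prod.
pose code := coset_code v pi r d a b.
pose coded g c := exists A B, [/\ inZK v A, inK v B, g = A *m lamw pi l1 l2 l3 *m B & code B = c].
apply: (size_le_card_of_code (has_code := coded) _ _ Hdist).
  by move=> i /Hin [A [B [A_ZK [B_K ->]]]]; exists (code B), A, B.
move=> _ _ c [A [B [A_ZK B_K -> code_B]]] [A' [B' [A'_ZK B'_K -> code_B']]].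
exact: (same_dc_of_coset_code HF Hpi0 Hpi d_res n l12 l23 A_ZK A'_ZK B_K B'_K)
  (etrans code_B (esym code_B')).
Qed.
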